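(* Let $F,G$ be completely multiplicative functions and $s=x+iy$ with $x,y\in\mathbb{R}$ such that $D(F,s)$ and $D(G,\overline{s})$ converge absolutely. Then \[D(F,s)\,D(G,\overline{s})=D(F\times G,2x)\,D\big(F_{y}\,\square\,G_{-y},\,x\big),\] where $F_y(n)=F(n)n^{-iy}$ and $G_{-y}(n)=G(n)n^{iy}$.
   Context: A completely multiplicative function is $F:\mathbb{N}^\star\to\mathbb{C}$ with $F(1)=1$ and $F(ab)=F(a)F(b)$ for all $a,b$. $D(F,s)=\sum_{n\ge1}F(n)n^{-s}$; $n^{it}=e^{it\ln n}$. $(F\times G)(n)=F(n)G(n)$, and $(F\,\square\,G)(m)=\sum_{ab=m,\ \gcd(a,b)=1}F(a)G(b)$ (unitary convolution). *)

From Stdlib Require Import Reals Lra Lia Arith List.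
Open Scope R_scope.

Definition Cplx := (R * R)%type.
Definition Cmk (a b : R) : Cplx := (a, b).
Definition Cre (z : Cplx) : R := fst z.
Definition Cim (z : Cplx) : R := snd z.
Definition C0 : Cplx := (0, 0).
Definition C1 : Cplx := (1, 0).
Definition Cadd (z w : Cplx) : Cplx := (Cre z + Cre w, Cim z + Cim w).
Definition Cmul (z w : Cplx) : Cplx :=
  (Cre z * Cre w - Cim z * Cim w, Cre z * Cim w + Cim z * Cre w).
Definition Cconj (z : Cplx) : Cplx := (Cre z, - Cim z).
Definition Cnorm (z : Cplx) : R := sqrt (Cre z * Cre z + Cim z * Cim z).

(* n^{-s} = exp(-s ln n) = n^{-x} (cos(y ln n) - i sin(y ln n)) for s = x+iy, n >= 1. *)
Definition npow_neg (n : nat) (s : Cplx) : Cplx :=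
  (Rpower (INR n) (- Cre s) * cos (Cim s * ln (INR n)),
   - (Rpower (INR n) (- Cre s) * sin (Cim s * ln (INR n)))).

(* Arithmetic functions N* -> Cplx (the value at 0 is irrelevant). *)
Definition arith := nat -> Cplx.

Definition completely_multiplicative (F : arith) : Prop :=
  F 1%nat = C1 /\
  forall a b : nat, (1 <= a)%nat -> (1 <= b)%nat -> F (a * b)%nat = Cmul (F a) (F b).

Definition pmul (F G : arith) : arith := fun n => Cmul (F n) (G n).

(* Unitary convolution: (F □ G)(m) = sum_{ab=m, gcd(a,b)=1} F(a) G(b). *)
Definition uconv (F G : arith) : arith := fun m =>
  fold_right Cadd C0
    (map (fun a => Cmul (F a) (G (m / a)%nat))
       (filter (fun a => (Nat.eqb (m mod a) 0 && Nat.eqb (Nat.gcd a (m / a)) 1)%bool)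
          (seq 1 m))).

Definition twist (F : arith) (y : R) : arith :=
  fun n => Cmul (F n) (npow_neg n (0, y)).

(* n-th term (n >= 1) of the Dirichlet series, reindexed from 0. *)
Definition Dterm (F : arith) (s : Cplx) (k : nat) : Cplx := Cmul (F (S k)) (npow_neg (S k) s).

Definition D_has_sum (F : arith) (s : Cplx) (l : Cplx) : Prop :=
  Un_cv (fun N => sum_f_R0 (fun k => Cre (Dterm F s k)) N) (Cre l) /\
  Un_cv (fun N => sum_f_R0 (fun k => Cim (Dterm F s k)) N) (Cim l).

Definition D_abs_conv (F : arith) (s : Cplx) : Prop :=
  exists L : R, Un_cv (fun N => sum_f_R0 (fun k => Cnorm (Dterm F s k)) N) L.

From Pilot Require Import Defs.
From Stdlib Require Import Reals.
From mathcomp Require Import all_boot all_order all_algebra.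
From mathcomp Require Import Rstruct.
From mathcomp.real_closed Require Import complex.
Set Implicit Arguments. Unset Strict Implicit. Unset Printing Implicit Defensive.
Import Order.TTheory GRing.Theory Num.Theory Normc.
Local Open Scope nat_scope.

(* Put f n = F(n) n^{-s} and g n = G(n) n^{-conj s}.  Both are completely multiplicative,
   f n * g n is the n-th term of D(F x G, 2x), and the unitary convolution of f and g at k
   is the k-th term of D(F_y □ G_{-y}, x).  Every pair (n, m) is uniquely (d a, d b) with
   d = gcd(n, m) and a, b coprime, and then f(n) g(m) = f(d) g(d) f(a) g(b).  Hence the
   product of the N-th partial sums of the two new series is the sum of f(n) g(m) over the
   pairs with gcd(n, m) <= N and nm / gcd(n, m)^2 <= N, a region squeezed between the
   squares [1, K]^2 (K^2 <= N) and [1, N^2]^2.  The same identity for |f|, |g| shows that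
   both new series converge absolutely, and it bounds the distance between that product and
   the product of the K-th partial sums of D(F, s) and D(G, conj s) by a tail of
   (sum |f|) (sum |g|), which tends to 0. *)

Lemma leq_square n : n <= n * n.
Proof. by case: n => // n; rewrite leq_pmulr. Qed.

Definition unitary_divisor (k a : nat) : bool := (a %| k) && coprime a (k %/ a).

Definition unitary_triple_count (N n m : nat) : nat :=
  \sum_(1 <= d < N.+1) \sum_(1 <= k < N.+1) \sum_(1 <= a < k.+1 | unitary_divisor k a)
     ((d * a == n) && (d * (k %/ a) == m)).

Lemma unitary_triple_eq (n m d k a : nat) : 0 < n -> 0 < d -> 0 < a ->
  unitary_divisor k a ->
  (d * a == n) && (d * (k %/ a) == m) =
  [&& d == gcdn n m, k == n %/ gcdn n m * (m %/ gcdn n m) & a == n %/ gcdn n m].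
Proof.
move=> n0 d0 a0 /andP[ak cop]; apply/idP/idP.
  move=> /andP[/eqP<- /eqP<-].
  by rewrite -muln_gcdr (eqP cop) muln1 !mulKn // mulnC divnK // !eqxx.
move=> /and3P[/eqP-> /eqP-> /eqP->].
have n_gt0 : 0 < n %/ gcdn n m by rewrite divn_gt0 ?gcdn_gt0 ?n0 // dvdn_leq // dvdn_gcdl.
by rewrite mulKn // !(mulnC (gcdn n m)) !divnK ?dvdn_gcdl ?dvdn_gcdr ?eqxx.
Qed.

Lemma sum_nat_pick m n i (P : pred nat) (F : nat -> nat) :
  \sum_(m <= j < n | P j) (j == i) * F j = if (m <= i < n) && P i then F i else 0.
Proof.
by under eq_bigr do rewrite mulnbl; rewrite -big_mkcondr big_nat1_cond_eq.
Qed.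

Lemma unitary_triple_countE N n m : 0 < n -> 0 < m ->
  unitary_triple_count N n m =
  (gcdn n m <= N) && (n %/ gcdn n m * (m %/ gcdn n m) <= N).
Proof.
move=> n0 m0; set g := gcdn n m; set a0 := n %/ g; set k0 := a0 * (m %/ g).
have g0 : 0 < g by rewrite gcdn_gt0 n0.
have a0_gt0 : 0 < a0 by rewrite divn_gt0 // dvdn_leq // dvdn_gcdl.
have k0_gt0 : 0 < k0 by rewrite muln_gt0 a0_gt0 divn_gt0 // dvdn_leq // dvdn_gcdr.
have a0_le_k0 : a0 <= k0 by rewrite dvdn_leq // dvdn_mulr.
have a0_unitary : unitary_divisor k0 a0.
  rewrite /unitary_divisor dvdn_mulr //= mulKn // /coprime -(eqn_pmul2l g0).
  by rewrite muln_gcdr muln1 !(mulnC g) /a0 !divnK ?dvdn_gcdl ?dvdn_gcdr.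
transitivity (\sum_(1 <= d < N.+1) (d == g) * \sum_(1 <= k < N.+1) (k == k0) *
                \sum_(1 <= a < k.+1 | unitary_divisor k a) (a == a0) * 1).
  apply: eq_big_nat => d /andP[d0 _]; rewrite big_distrr; apply: eq_big_nat => k _.
  rewrite !big_distrr big_nat_cond [RHS]big_nat_cond.
  apply: eq_bigr => a /andP[/andP[a_gt0 _] ak].
  by rewrite unitary_triple_eq // muln1 /= !mulnb.
rewrite sum_nat_pick /= g0 sum_nat_pick /= k0_gt0 sum_nat_pick /= a0_gt0 !andbT !ltnS.
by rewrite a0_le_k0 a0_unitary; case: (g <= N); case: (k0 <= N).
Qed.

Lemma unitary_triple_count_le1 N n m : 0 < n -> 0 < m -> unitary_triple_count N n m <= 1.
Proof. by move=> n0 m0; rewrite unitary_triple_countE // leq_b1. Qed.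

Lemma unitary_triple_count_square N K n m : 0 < n <= K -> 0 < m <= K -> K * K <= N ->
  unitary_triple_count N n m = 1.
Proof.
move=> /andP[n0 nK] /andP[m0 mK] KN; rewrite unitary_triple_countE //.
have nmN : n * m <= N by apply: leq_trans (leq_mul nK mK) KN.
have nN : n <= N by apply: leq_trans nmN; rewrite leq_pmulr.
rewrite (leq_trans (dvdn_leq n0 (dvdn_gcdl n m))) //.
by rewrite (leq_trans _ nmN) // leq_mul // leq_div.
Qed.

Section FiniteSums.
Local Open Scope ring_scope.

Definition completely_mult (V : pzSemiRingType) (f : nat -> V) : Prop :=
  forall m n, (0 < m)%N -> (0 < n)%N -> f (m * n)%N = f m * f n.

Definition partial_sum (V : nmodType) (u : nat -> V) (N : nat) : V :=
  \sum_(1 <= n < N.+1) u n.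

Definition unitary_conv (V : pzSemiRingType) (f g : nat -> V) (k : nat) : V :=
  \sum_(1 <= a < k.+1 | unitary_divisor k a) f a * g (k %/ a)%N.

Lemma sumr_nat_pick (V : pzSemiRingType) (m0 L u : nat) (F : nat -> V) :
  (m0 <= u < L)%N -> \sum_(m0 <= n < L) (u == n)%:R * F n = F u.
Proof.
move=> uL; under eq_bigr do rewrite mulr_natl mulrb eq_sym.
by rewrite -big_mkcond big_nat1_eq uL.
Qed.

Lemma sumr_nat_pick2 (V : pzSemiRingType) (L u v : nat) (h : nat -> nat -> V) :
  (0 < u < L)%N -> (0 < v < L)%N ->
  \sum_(1 <= n < L) \sum_(1 <= m < L) ((u == n) && (v == m))%:R * h n m = h u v.
Proof.
move=> uL vL; under eq_bigr => n _ do under eq_bigr => m _ do rewrite -mulnb natrM -mulrA.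
by under eq_bigr => n _ do rewrite -big_distrr /= sumr_nat_pick //; rewrite sumr_nat_pick.
Qed.

Lemma exchange_big2 (V : nmodType) (I : Type) (r : seq I) (P : pred I)
    (s1 s2 : seq nat) (w : I -> nat -> nat -> V) :
  \sum_(i <- r | P i) \sum_(n <- s1) \sum_(m <- s2) w i n m =
  \sum_(n <- s1) \sum_(m <- s2) \sum_(i <- r | P i) w i n m.
Proof. by rewrite exchange_big; apply: eq_bigr => n _; rewrite exchange_big. Qed.

Lemma partial_sum_mul_unitary_conv (V : comPzRingType) (f g : nat -> V) (N : nat) :
  completely_mult f -> completely_mult g ->
  partial_sum (fun d => f d * g d) N * partial_sum (unitary_conv f g) N =
  \sum_(1 <= n < (N * N).+1) \sum_(1 <= m < (N * N).+1)
     (unitary_triple_count N n m)%:R * (f n * g m).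
Proof.
move=> fM gM; rewrite /partial_sum /unitary_conv big_distrl /=.
under eq_bigr => d _ do rewrite big_distrr /=.
under eq_bigr => d _ do under eq_bigr => k _ do rewrite big_distrr /=.
transitivity (\sum_(1 <= n < (N * N).+1) \sum_(1 <= m < (N * N).+1)
  \sum_(1 <= d < N.+1) \sum_(1 <= k < N.+1) \sum_(1 <= a < k.+1 | unitary_divisor k a)
     ((d * a == n)%N && (d * (k %/ a) == m)%N)%:R * (f n * g m)); last first.
  apply: eq_bigr => n _; apply: eq_bigr => m _; rewrite natr_sum mulr_suml.
  apply: eq_bigr => d _; rewrite natr_sum mulr_suml.
  by apply: eq_bigr => k _; rewrite natr_sum mulr_suml.
rewrite -exchange_big2; apply: eq_big_nat => d /andP[d0 dN].
rewrite -exchange_big2; apply: eq_big_nat => k /andP[_ kN].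
rewrite -exchange_big2 big_nat_cond [RHS]big_nat_cond.
apply: eq_bigr => a /andP[/andP[a0 ak] _].
have a_le_k : (a <= k)%N by rewrite -ltnS.
have ka0 : (0 < k %/ a)%N by rewrite divn_gt0.
have aN : (a <= N)%N := leq_trans a_le_k kN.
have kaN : (k %/ a <= N)%N := leq_trans (leq_div k a) kN.
rewrite sumr_nat_pick2; last 2 first.
- by rewrite muln_gt0 d0 a0 ltnS leq_mul.
- by rewrite muln_gt0 d0 ka0 ltnS leq_mul.
by rewrite fM // gM // mulrACA.
Qed.

Section SquareSums.
Variables (V : comPzRingType) (f g : nat -> V) (K L : nat).
Hypothesis KL : (K <= L)%N.

Lemma partial_sum_mul_square :
  partial_sum f K * partial_sum g K =
  \sum_(1 <= n < L.+1) \sum_(1 <= m < L.+1) ((n <= K) && (m <= K))%N%:R * (f n * g m).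
Proof.
have restrict (h : nat -> V) : partial_sum h K = \sum_(1 <= n < L.+1) (n <= K)%N%:R * h n.
  under eq_bigr do rewrite mulr_natl mulrb.
  by rewrite -big_mkcond /= /partial_sum (big_nat_widen _ _ _ _ _ (KL : (K.+1 <= L.+1)%N)).
rewrite !restrict big_distrl; apply: eq_bigr => n _; rewrite big_distrr; apply: eq_bigr => m _.
by rewrite -mulnb natrM mulrACA.
Qed.

Lemma partial_sum_mul_square_compl :
  partial_sum f L * partial_sum g L - partial_sum f K * partial_sum g K =
  \sum_(1 <= n < L.+1) \sum_(1 <= m < L.+1) (~~ ((n <= K) && (m <= K)))%N%:R * (f n * g m).
Proof.
rewrite partial_sum_mul_square /partial_sum big_distrl -sumrB; apply: eq_bigr => n _.
rewrite big_distrr -sumrB; apply: eq_bigr => m _.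
by case: (_ && _); rewrite ?mul1r ?mul0r ?subrr ?subr0.
Qed.

End SquareSums.

Lemma partial_sum_ge1 (V : numDomainType) (u : nat -> V) N :
  (0 < N)%N -> u 1%N = 1 -> (forall n, 0 <= u n) -> 1 <= partial_sum u N.
Proof.
by move=> N0 u1 u0; rewrite /partial_sum big_ltn ?ltnS // u1 lerDl sumr_ge0.
Qed.

End FiniteSums.

Section RealSeries.
Local Open Scope R_scope.

Lemma Un_cv_succE (u : nat -> R) l : Un_cv (fun n => u n.+1) l <-> Un_cv u l.
Proof.
split=> h; first by apply: (CV_shift _ 1); apply: Un_cv_ext h => n; rewrite Nat.add_1_r.
by apply: Un_cv_ext (CV_shift' _ 1 _ h) => n; rewrite Nat.add_1_r.
Qed.

Lemma Un_cv_sq (u : nat -> R) l : Un_cv u l -> Un_cv (fun n => u (n * n)%N) l.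
Proof.
move=> h eps /h[N hN]; exists N => n /ssrnat.leP nN; apply: hN; apply/ssrnat.leP.
exact: leq_trans nN (leq_square n).
Qed.

Lemma Un_cv_dominated0 (u e : nat -> R) :
  (forall n, Rabs (u n) <= e n) -> Un_cv e 0 -> Un_cv u 0.
Proof.
move=> ue he eps /he[N hN]; exists N => n /hN; rewrite /Rdist !Rminus_0_r => en.
exact: Rle_lt_trans (ue n) (Rle_lt_trans _ _ _ (Rle_abs _) en).
Qed.

Lemma partial_sum_succ (u : nat -> R) N :
  partial_sum u N.+1 = sum_f_R0 (fun k => u k.+1) N.
Proof.
rewrite /partial_sum big_add1 /=.
elim: N => [|N IH] /=; first by rewrite big_nat1.
by rewrite big_nat_recr //= IH.
Qed.

Lemma Un_cv_sum_f_R0E (w v : nat -> R) l : (forall k, w k = v k.+1) ->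
  Un_cv (sum_f_R0 w) l <-> Un_cv (partial_sum v) l.
Proof.
move=> wv; rewrite -(Un_cv_succE (partial_sum v)).
have eqN N : sum_f_R0 w N = partial_sum v N.+1.
  by rewrite partial_sum_succ; apply: PartSum.sum_eq => k _; rewrite wv.
by split=> h; apply: Un_cv_ext h => N; rewrite eqN.
Qed.

End RealSeries.

Section RealSeriesBounds.
Local Open Scope ring_scope.

Lemma partial_sum_le_lim (M : nat -> R) A : (forall n, 0 <= M n) ->
  Un_cv (partial_sum M) A -> forall N, partial_sum M N <= A.
Proof.
move=> M0 hA N; apply/RleP; apply: growing_ineq hA N => {}N; apply/RleP.
by rewrite /partial_sum [X in _ <= X]big_nat_recr //= lerDl.
Qed.

Lemma partial_sum_abs_cv (v M : nat -> R) c :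
  (forall n, (0 < n)%N -> `|v n| <= M n) -> (forall N, partial_sum M N <= c) ->
  exists l, Un_cv (partial_sum v) l.
Proof.
move=> vM Mc.
have grow : Un_growing (sum_f_R0 (fun k => `|v k.+1|)).
  by move=> n /=; apply/RleP; rewrite lerDl.
have ub : has_ub (sum_f_R0 (fun k => `|v k.+1|)).
  exists c => _ [N ->]; apply/RleP; apply: le_trans (Mc N.+1); rewrite partial_sum_succ.
  by apply/RleP; apply: sum_Rle => n _; apply/RleP; apply: vM.
have [l hl] := growing_cv _ grow ub.
have [l' hl'] := cv_cauchy_2 _ (cauchy_abs _ (cv_cauchy_1 _ (exist _ l hl))).
exists l'; exact: (@Un_cv_sum_f_R0E (fun k => v k.+1) v l' (fun k => erefl)).1 hl'.
Qed.

Lemma Un_cv_eq_of_close (p q e : nat -> R) x y : Un_cv p x -> Un_cv q y -> Un_cv e 0 ->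
  (forall K, `|q (K * K)%N - p K| <= e K) -> x = y.
Proof.
move=> px qy e0 close.
have diff_lim := CV_minus _ _ _ _ (Un_cv_sq qy) px.
have diff0 : Un_cv (fun K => q (K * K)%N - p K) 0.
  by apply: (Un_cv_dominated0 _ e0) => K; apply/RleP.
by apply/eqP; rewrite eq_sym -subr_eq0; apply/eqP; exact: UL_sequence diff_lim diff0.
Qed.

End RealSeriesBounds.

Section ComplexSeries.
Local Open Scope ring_scope.

Definition cvC (u : nat -> R[i]) (l : R[i]) : Prop :=
  Un_cv (fun n => complex.Re (u n)) (complex.Re l) /\
  Un_cv (fun n => complex.Im (u n)) (complex.Im l).

Lemma ReM (z w : R[i]) :
  complex.Re (z * w) = complex.Re z * complex.Re w - complex.Im z * complex.Im w.
Proof. by case: z; case: w. Qed.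

Lemma ImM (z w : R[i]) :
  complex.Im (z * w) = complex.Re z * complex.Im w + complex.Im z * complex.Re w.
Proof. by case: z; case: w. Qed.

Lemma cvC_mul u v l m : cvC u l -> cvC v m -> cvC (fun n => u n * v n) (l * m).
Proof.
move=> [ur ui] [vr vi]; split.
  rewrite ReM; apply: Un_cv_ext (CV_minus _ _ _ _ (CV_mult _ _ _ _ ur vr) (CV_mult _ _ _ _ ui vi)).
  by move=> n; rewrite ReM.
rewrite ImM; apply: Un_cv_ext (CV_plus _ _ _ _ (CV_mult _ _ _ _ ur vi) (CV_mult _ _ _ _ ui vr)).
by move=> n; rewrite ImM.
Qed.

Lemma cvC_partial_sumE (u : nat -> R[i]) l : cvC (partial_sum u) l <->
  Un_cv (partial_sum (fun n => complex.Re (u n))) (complex.Re l) /\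
  Un_cv (partial_sum (fun n => complex.Im (u n))) (complex.Im l).
Proof.
have ReE N : complex.Re (partial_sum u N) = partial_sum (fun n => complex.Re (u n)) N.
  exact: raddf_sum.
have ImE N : complex.Im (partial_sum u N) = partial_sum (fun n => complex.Im (u n)) N.
  exact: raddf_sum.
split=> -[re im]; split.
- by apply: Un_cv_ext re.
- by apply: Un_cv_ext im.
- by apply: Un_cv_ext re => N; rewrite ReE.
- by apply: Un_cv_ext im => N; rewrite ImE.
Qed.

Lemma normc_ge0 (z : R[i]) : 0 <= normc z.
Proof. by case: z => a b; apply: sqrtr_ge0. Qed.

Lemma Re_le_normc (z : R[i]) : `|complex.Re z| <= normc z.
Proof. by case: z => a b /=; rewrite -sqrtr_sqr ler_wsqrtr // lerDl sqr_ge0. Qed.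

Lemma Im_le_normc (z : R[i]) : `|complex.Im z| <= normc z.
Proof. by case: z => a b /=; rewrite -sqrtr_sqr ler_wsqrtr // lerDr sqr_ge0. Qed.

Lemma normc_sum (I : Type) (r : seq I) (P : pred I) (F : I -> R[i]) :
  normc (\sum_(i <- r | P i) F i) <= \sum_(i <- r | P i) normc (F i).
Proof.
elim/big_ind2: _ => [|x1 x2 y1 y2 h1 h2|//]; first by rewrite normc0.
exact: le_trans (le_normcD _ _) (lerD h1 h2).
Qed.

Lemma normc_completely_mult (h : nat -> R[i]) :
  completely_mult h -> completely_mult (fun n => normc (h n)).
Proof. by move=> hM m n m0 n0; rewrite hM // normcM. Qed.

Lemma cvC_eq_of_close (P Q : nat -> R[i]) X Y (e : nat -> R) :
  cvC P X -> cvC Q Y -> Un_cv e 0 ->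
  (forall K, normc (Q (K * K)%N - P K) <= e K) -> X = Y.
Proof.
move=> [PXr PXi] [QYr QYi] e0 close.
have Re_eq : complex.Re X = complex.Re Y.
  apply: (Un_cv_eq_of_close PXr QYr e0) => K.
  by rewrite -raddfB; apply: le_trans (Re_le_normc _) (close K).
have Im_eq : complex.Im X = complex.Im Y.
  apply: (Un_cv_eq_of_close PXi QYi e0) => K.
  by rewrite -raddfB; apply: le_trans (Im_le_normc _) (close K).
by apply/eqP; rewrite eq_complex Re_eq Im_eq !eqxx.
Qed.

Lemma partial_sum_cvC (u : nat -> R[i]) (M : nat -> R) c :
  (forall n, (0 < n)%N -> normc (u n) <= M n) -> (forall N, partial_sum M N <= c) ->
  exists l, cvC (partial_sum u) l.
Proof.
move=> uM Mc.
have [lr hr] : exists l, Un_cv (partial_sum (fun n => complex.Re (u n))) l.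
  by apply: partial_sum_abs_cv Mc => n n0; apply: le_trans (Re_le_normc _) (uM n n0).
have [li hi] : exists l, Un_cv (partial_sum (fun n => complex.Im (u n))) l.
  by apply: partial_sum_abs_cv Mc => n n0; apply: le_trans (Im_le_normc _) (uM n n0).
by exists (Complex lr li); apply/cvC_partial_sumE.
Qed.

End ComplexSeries.

Section DirichletProduct.
Local Open Scope ring_scope.
Variables (f g : nat -> R[i]) (A B : R).
Hypotheses (fM : completely_mult f) (gM : completely_mult g).
Hypotheses (f1 : f 1%N = 1) (g1 : g 1%N = 1).
Let af n := normc (f n).
Let bg n := normc (g n).
Hypotheses (fA : Un_cv (partial_sum af) A) (gB : Un_cv (partial_sum bg) B).

Let afM : completely_mult af := normc_completely_mult fM.
Let bgM : completely_mult bg := normc_completely_mult gM.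
Let af_ge0 n : 0 <= af n. Proof. exact: normc_ge0. Qed.
Let bg_ge0 n : 0 <= bg n. Proof. exact: normc_ge0. Qed.
Let PA_le N : partial_sum af N <= A. Proof. exact: partial_sum_le_lim. Qed.
Let PB_le N : partial_sum bg N <= B. Proof. exact: partial_sum_le_lim. Qed.
Let A_ge0 : 0 <= A. Proof. by apply: le_trans (PA_le 0); rewrite /partial_sum big_geq. Qed.
Let B_ge0 : 0 <= B. Proof. by apply: le_trans (PB_le 0); rewrite /partial_sum big_geq. Qed.

Lemma normc_unitary_conv k : normc (unitary_conv f g k) <= unitary_conv af bg k.
Proof. by apply: le_trans (normc_sum _ _ _) _; apply: ler_sum => a _; rewrite normcM. Qed.

Lemma partial_sum_mul_unitary_conv_le N :
  partial_sum (fun n => af n * bg n) N * partial_sum (unitary_conv af bg) N <= A * B.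
Proof.
rewrite partial_sum_mul_unitary_conv //.
apply: le_trans (_ : _ <= partial_sum af (N * N) * partial_sum bg (N * N)) _; last first.
  by apply: ler_pM; rewrite ?sumr_ge0.
rewrite /partial_sum big_distrl; apply: ler_sum_nat => n /andP[n0 _].
rewrite big_distrr; apply: ler_sum_nat => m /andP[m0 _].
by rewrite ler_piMl ?mulr_ge0 // lern1 unitary_triple_count_le1.
Qed.

(* Both factors of the product above are at least 1, their first terms being
   |f 1| |g 1| = 1, so each is bounded by the product. *)
Lemma partial_sum_diag_le N : partial_sum (fun n => af n * bg n) N <= A * B.
Proof.
case: N => [|N]; first by rewrite /partial_sum big_geq // mulr_ge0.
apply: le_trans (partial_sum_mul_unitary_conv_le N.+1); rewrite ler_peMr ?sumr_ge0 //.
  by move=> n _; rewrite mulr_ge0.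
apply: partial_sum_ge1 => // [|k]; last by apply: sumr_ge0 => a _; rewrite mulr_ge0.
by rewrite /unitary_conv big_mkcond big_nat1 /= /af /bg f1 g1 normc1 mulr1.
Qed.

Lemma partial_sum_unitary_conv_le N : partial_sum (unitary_conv af bg) N <= A * B.
Proof.
case: N => [|N]; first by rewrite /partial_sum big_geq // mulr_ge0.
apply: le_trans (partial_sum_mul_unitary_conv_le N.+1); rewrite ler_peMl //.
  by apply: sumr_ge0 => k _; apply: sumr_ge0 => a _; rewrite mulr_ge0.
apply: partial_sum_ge1 => // [|n]; last by rewrite mulr_ge0.
by rewrite /af /bg f1 g1 normc1 mulr1.
Qed.

(* The coefficient of f n * g m in the difference vanishes on [1, K]^2 and lies in
   {0, 1} elsewhere. *)
Lemma unitary_product_error N K : (K * K <= N)%N ->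
  normc (partial_sum (fun n => f n * g n) N * partial_sum (unitary_conv f g) N
         - partial_sum f K * partial_sum g K)
  <= partial_sum af (N * N) * partial_sum bg (N * N) - partial_sum af K * partial_sum bg K.
Proof.
move=> KN; have KL : (K <= N * N)%N.
  exact: leq_trans (leq_square K) (leq_trans KN (leq_square N)).
rewrite partial_sum_mul_unitary_conv // (partial_sum_mul_square f g KL).
rewrite partial_sum_mul_square_compl // -sumrB.
apply: le_trans (normc_sum _ _ _) _; apply: ler_sum_nat => n /andP[n0 _].
rewrite -sumrB; apply: le_trans (normc_sum _ _ _) _; apply: ler_sum_nat => m /andP[m0 _].
rewrite -mulrBl normcM.
case: (boolP ((n <= K) && (m <= K))%N) => [/andP[nK mK]|_] /=.
  by rewrite (unitary_triple_count_square (K := K)) ?n0 ?m0 ?nK ?mK // subrr normc0 !mul0r.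
rewrite subr0 normcMn normc1 mul1r normcM; apply: ler_piMl; first by rewrite mulr_ge0 ?normc_ge0.
by rewrite lern1 unitary_triple_count_le1.
Qed.

Lemma unitary_product_error_cv0 :
  Un_cv (fun K => A * B - partial_sum af K * partial_sum bg K) 0.
Proof.
have AB_cv : Un_cv (fun _ => A * B) (A * B).
  by move=> eps e0; exists 0%N => n _; rewrite /Rdist RminusE subrr Rabs_R0.
by have := CV_minus _ _ _ _ AB_cv (CV_mult _ _ _ _ fA gB); rewrite RminusE subrr.
Qed.

Theorem dirichlet_unitary_product :
  exists a b, cvC (partial_sum (fun n => f n * g n)) a /\
    cvC (partial_sum (unitary_conv f g)) b /\
    forall l1 l2, cvC (partial_sum f) l1 -> cvC (partial_sum g) l2 -> l1 * l2 = a * b.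
Proof.
have [a fg_cv] : exists a, cvC (partial_sum (fun n => f n * g n)) a.
  by apply: (partial_sum_cvC _ partial_sum_diag_le) => n _; rewrite normcM.
have [b conv_cv] : exists b, cvC (partial_sum (unitary_conv f g)) b.
  exact: (partial_sum_cvC (fun k _ => normc_unitary_conv k) partial_sum_unitary_conv_le).
exists a, b; do 2!split=> //; move=> l1 l2 f_cv g_cv.
apply: (cvC_eq_of_close (cvC_mul f_cv g_cv) (cvC_mul fg_cv conv_cv) unitary_product_error_cv0).
move=> K; apply: le_trans (unitary_product_error (leqnn _)) _.
by rewrite lerD2r ler_pM ?sumr_ge0.
Qed.

End DirichletProduct.

Section PowerFunction.
Local Open Scope R_scope.

Lemma npow_neg1 s : npow_neg 1 s = Defs.C1.
Proof.
rewrite /npow_neg /Defs.C1 /= ln_1 Rmult_0_r cos_0 sin_0 /Rpower ln_1 Rmult_0_r exp_0.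
by congr pair; ring.
Qed.

Lemma npow_negM a b s : (0 < a)%N -> (0 < b)%N ->
  npow_neg (a * b) s = Cmul (npow_neg a s) (npow_neg b s).
Proof.
move=> /ssrnat.leP/lt_0_INR a0 /ssrnat.leP/lt_0_INR b0.
rewrite /npow_neg /Cmul /Cre /Cim /= mult_INR ln_mult // Rmult_plus_distr_l.
rewrite cos_plus sin_plus -Rpower_mult_distr //.
by congr pair; ring.
Qed.

Lemma npow_neg_split n x y :
  npow_neg n (x, y) = Cmul (npow_neg n (0, y)) (npow_neg n (x, 0)).
Proof.
rewrite /npow_neg /Cmul /Cre /Cim /= Ropp_0 Rmult_0_l cos_0 sin_0.
rewrite (_ : Rpower (INR n) 0 = 1); last by rewrite /Rpower Rmult_0_l exp_0.
by congr pair; ring.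
Qed.

Lemma npow_neg_mul_conj n x y :
  npow_neg n (2 * x, 0) = Cmul (npow_neg n (x, y)) (npow_neg n (x, - y)).
Proof.
rewrite /npow_neg /Cmul /Cre /Cim /= Rmult_0_l cos_0 sin_0.
rewrite (_ : - (2 * x) = - x + - x); last by ring.
rewrite Rpower_plus (_ : - y * ln (INR n) = - (y * ln (INR n))); last by ring.
rewrite cos_neg sin_neg; congr pair; last by ring.
set p := Rpower (INR n) (- x); set c := cos _; set s := sin _.
transitivity (p * p * (s * s + c * c)); last by ring.
by have := sin2_cos2 (y * ln (INR n)); rewrite /Rsqr => ->; ring.
Qed.

End PowerFunction.

Lemma Nat_divE m a : 0 < a -> Nat.div m a = m %/ a.
Proof.
move=> a0; have /ssrnat.ltP lt_ra : (Nat.modulo m a < a)%coq_nat.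
  by apply: Nat.mod_upper_bound; case: a a0.
by rewrite [in RHS](Nat.div_mod_eq m a) plusE multE mulnC divnMDl // divn_small // addn0.
Qed.

Lemma Nat_modE m a : 0 < a -> Nat.modulo m a = m %% a.
Proof.
move=> a0; have /ssrnat.ltP lt_ra : (Nat.modulo m a < a)%coq_nat.
  by apply: Nat.mod_upper_bound; case: a a0.
by rewrite [in RHS](Nat.div_mod_eq m a) plusE multE mulnC modnMDl modn_small.
Qed.

Lemma Nat_gcdE a b : Nat.gcd a b = gcdn a b.
Proof.
have dvdnE d n : Nat.divide d n <-> d %| n.
  by split=> [[c ->]|/dvdnP[c ->]]; [rewrite multE dvdn_mull | exists c; rewrite multE].
symmetry; apply: gcdn_def.
- by apply/dvdnE; apply: Nat.gcd_divide_l.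
- by apply/dvdnE; apply: Nat.gcd_divide_r.
- by move=> d /dvdnE da /dvdnE db; apply/dvdnE; apply: Nat.gcd_greatest.
Qed.

Lemma Nat_eqbE m n : Nat.eqb m n = (m == n).
Proof. by apply/idP/eqP => /Nat.eqb_spec. Qed.

Lemma unitary_divisorE m a : 0 < a ->
  Nat.eqb (Nat.modulo m a) 0 && Nat.eqb (Nat.gcd a (Nat.div m a)) 1 = unitary_divisor m a.
Proof. by move=> a0; rewrite !Nat_eqbE Nat_modE // Nat_divE // Nat_gcdE. Qed.

Lemma List_seqE s n : List.seq s n = iota s n.
Proof. by elim: n s => // n IH s /=; rewrite IH. Qed.

Lemma List_filterE (T : Type) (p : pred T) (l : seq T) : List.filter p l = filter p l.
Proof. by elim: l => // x l IH /=; rewrite IH. Qed.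

Section DirichletCoefficients.
Local Open Scope R_scope.

Definition toC (z : Cplx) : R[i] := Complex (Cre z) (Cim z).
Definition ofC (z : R[i]) : Cplx := (complex.Re z, complex.Im z).

Lemma toC_ofC z : toC (ofC z) = z. Proof. by case: z. Qed.

Lemma toC_inj : injective toC. Proof. by case=> a b [c d] [-> ->]. Qed.

Lemma toC_mul z w : toC (Cmul z w) = (toC z * toC w)%R. Proof. by []. Qed.

Lemma Cnorm_toC z : Cnorm z = normc (toC z). Proof. by rewrite /Cnorm RsqrtE. Qed.

Lemma toC_fold_map (T : Type) (phi : T -> Cplx) (l : seq T) :
  toC (List.fold_right Cadd Defs.C0 (List.map phi l)) = (\sum_(a <- l) toC (phi a))%R.
Proof. by elim: l => [|a l IH] /=; rewrite ?big_nil // big_cons -IH. Qed.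

Lemma toC_uconv (H K : arith) m :
  toC (uconv H K m) = unitary_conv (fun n => toC (H n)) (fun n => toC (K n)) m.
Proof.
rewrite /uconv toC_fold_map List_filterE List_seqE big_filter /unitary_conv.
have -> : iota 1 m = index_iota 1 m.+1 by rewrite /index_iota subn1.
rewrite big_nat_cond [RHS]big_nat_cond.
apply: eq_big => [a|a /andP[/andP[a0 _] _]]; last by rewrite Nat_divE.
by case/boolP: (0 < a < m.+1)%N => //= /andP[a0 _]; rewrite unitary_divisorE.
Qed.

Definition dcoef (F : arith) (s : Cplx) (n : nat) : R[i] := toC (Cmul (F n) (npow_neg n s)).

Lemma dcoef_mult F s : completely_multiplicative F -> completely_mult (dcoef F s).
Proof.
move=> [_ FM] m n m0 n0; have /ssrnat.leP m1 := m0; have /ssrnat.leP n1 := n0.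
by rewrite /dcoef FM // npow_negM // !toC_mul mulrACA.
Qed.

Lemma dcoef1 F s : completely_multiplicative F -> dcoef F s 1 = 1%R.
Proof. by move=> [F1 _]; rewrite /dcoef F1 npow_neg1 toC_mul mulr1. Qed.

Lemma dcoef_pmul F G x y n :
  dcoef (pmul F G) (2 * x, 0) n = (dcoef F (x, y) n * dcoef G (x, - y) n)%R.
Proof. by rewrite /dcoef /pmul (npow_neg_mul_conj n x y) !toC_mul mulrACA. Qed.

Lemma dcoef_uconv F G x y m : (0 < m)%N ->
  dcoef (uconv (twist F y) (twist G (- y))) (x, 0) m =
  unitary_conv (dcoef F (x, y)) (dcoef G (x, - y)) m.
Proof.
move=> m0; rewrite /dcoef toC_mul toC_uconv /unitary_conv big_distrl /=.
rewrite big_nat_cond [RHS]big_nat_cond; apply: eq_bigr => a /andP[/andP[a0 _] /andP[am _]].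
have ma0 : (0 < m %/ a)%N by rewrite divn_gt0 // dvdn_leq.
have -> : npow_neg m (x, 0) = Cmul (npow_neg a (x, 0)) (npow_neg (m %/ a) (x, 0)).
  by rewrite -npow_negM // mulnC divnK.
rewrite /twist !toC_mul (npow_neg_split a x y) (npow_neg_split (m %/ a) x (- y)) !toC_mul.
by rewrite mulrACA -!mulrA.
Qed.

Lemma D_has_sumE F s (u : nat -> R[i]) : (forall n, (0 < n)%N -> dcoef F s n = u n) ->
  forall l, D_has_sum F s l <-> cvC (partial_sum u) (toC l).
Proof.
move=> Fu l; rewrite cvC_partial_sumE /D_has_sum.
rewrite (Un_cv_sum_f_R0E (v := fun n => complex.Re (u n))) => [|k]; last by rewrite -Fu.
by rewrite (Un_cv_sum_f_R0E (v := fun n => complex.Im (u n))) => [|k]; last by rewrite -Fu.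
Qed.

Lemma D_abs_convE F s : D_abs_conv F s ->
  exists A, Un_cv (partial_sum (fun n => normc (dcoef F s n))) A.
Proof.
case=> A hA; exists A.
by apply/(Un_cv_sum_f_R0E (w := fun k => Cnorm (Dterm F s k))) => // k; rewrite Cnorm_toC.
Qed.

End DirichletCoefficients.

Local Open Scope R_scope.

Theorem mainTheorem13 (F G : arith) (x y : R) :
  completely_multiplicative F ->
  completely_multiplicative G ->
  D_abs_conv F (x, y) ->
  D_abs_conv G (Cconj (x, y)) ->
  exists a b : Cplx,
    D_has_sum (pmul F G) (2 * x, 0) a /\
    D_has_sum (uconv (twist F y) (twist G (- y))) (x, 0) b /\
    forall l1 l2 : Cplx,
      D_has_sum F (x, y) l1 -> D_has_sum G (Cconj (x, y)) l2 ->
      Cmul l1 l2 = Cmul a b.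
Proof.
move=> HF HG /D_abs_convE[A fA] /D_abs_convE[B gB].
have [a [b [fg_cv [conv_cv prod_eq]]]] :=
  dirichlet_unitary_product (dcoef_mult _ HF) (dcoef_mult _ HG) (dcoef1 _ HF) (dcoef1 _ HG) fA gB.
exists (ofC a), (ofC b); split; last split.
- by apply/(D_has_sumE (fun n _ => dcoef_pmul F G x y n)); rewrite toC_ofC.
- by apply/(D_has_sumE (@dcoef_uconv F G x y)); rewrite toC_ofC.
move=> l1 l2 /(@D_has_sumE _ _ (dcoef F (x, y)) (fun n _ => erefl)) l1_cv.
move=> /(@D_has_sumE _ _ (dcoef G (x, - y)) (fun n _ => erefl)) l2_cv.
by apply: toC_inj; rewrite !toC_mul !toC_ofC; apply: prod_eq.
Qed.
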